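(* Let $M=((W,\preccurlyeq,S),V)$ be a temporal equilibrium model of a temporal theory $\Gamma$ and let $\mathrm{Th}(M):=\{\varphi\mid M,(0,0)\models\varphi\}$. For every THT model $M'=((W,\preccurlyeq,S),V')$, if $M',(0,0)\models\Gamma\cup\{\neg\varphi\mid\varphi\notin\mathrm{Th}(M)\}$, then $V((i,1))=V'((i,1))=V'((i,0))$ for all $i\ge0$.
   Context: Fix a countable set $\mathbb{P}$ of atoms. Temporal formulas: $\varphi ::= p\mid\bot\mid\varphi\wedge\varphi\mid\varphi\vee\varphi\mid\varphi\to\varphi\mid\circ\varphi\mid\varphi\,\mathsf{U}\,\varphi\mid\varphi\,\mathsf{R}\,\varphi$; $\neg\varphi:=\varphi\to\bot$. The THT frame is $W=\mathbb{N}\times\{0,1\}$, $(i,h)\preccurlyeq(j,t)$ iff $i=j$ and $h\le t$, $S((i,k))=(i+1,k)$. A THT model is $((W,\preccurlyeq,S),V)$ with $V:W\to2^{\mathbb{P}}$ and $V((i,0))\subseteq V((i,1))$. Satisfaction: $M,w\models p$ iff $p\in V(w)$; $\bot$ never; $\wedge,\vee$ pointwise; $M,w\models\varphi\to\psi$ iff for all $v\succcurlyeq w$, $M,v\models\varphi$ implies $M,v\models\psi$; $M,w\models\circ\varphi$ iff $M,S(w)\models\varphi$; $\varphi\,\mathsf{U}\,\psi$: some $k\ge0$ with $M,S^k(w)\models\psi$ and $M,S^i(w)\models\varphi$ for all $0\le i<k$; $\varphi\,\mathsf{R}\,\psi$: for all $k\ge0$, $M,S^k(w)\models\psi$ or $M,S^i(w)\models\varphi$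 for some $0\le i<k$. $M$ is total if $V((i,0))=V((i,1))$ for all $i$. $M'\le M$ iff $V'((i,1))=V((i,1))$ and $V'((i,0))\subseteq V((i,0))$ for all $i$; $M'<M$ iff $M'\le M$ and $V'\neq V$. A temporal equilibrium model of $\Gamma$ is a total THT model $M$ with $M,(0,0)\models\Gamma$ such that no THT model $M'<M$ has $M',(0,0)\models\Gamma$. *)

From mathcomp Require Import ssreflect ssrbool eqtype choice.
From Stdlib Require Import Arith.

Set Implicit Arguments.

Inductive formula (A : Type) : Type :=
| Atom : A -> formula A
| Bot : formula A
| And : formula A -> formula A -> formula A
| Or : formula A -> formula A -> formula A
| Imp : formula A -> formula A -> formula A
| Next : formula A -> formula A
| Until : formula A -> formula A -> formula A
| Release : formula A -> formula A -> formula A.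

Arguments Bot {A}.

Definition Neg (A : Type) (phi : formula A) : formula A := Imp phi Bot.

(* A valuation on the THT frame W = nat * {0,1}; the second component is
   encoded by bool (false = 0, true = 1).  The order (i,h) <= (j,t) iff i = j and h <= t, and the
   successor S (i,k) = (i+1,k) are built into [sat] below. *)
Definition valuation (A : Type) := nat -> bool -> A -> Prop.

Definition tht_model (A : Type) (V : valuation A) : Prop :=
  forall i p, V i false p -> V i true p.

Definition hle (h t : bool) : Prop := implb h t = true.

Fixpoint sat (A : Type) (V : valuation A) (i : nat) (h : bool)
  (phi : formula A) {struct phi} : Prop :=
  match phi with
  | Atom p => V i h p
  | Bot => False
  | And a b => sat V i h a /\ sat V i h b
  | Or a b => sat V i h a \/ sat V i h b
  | Imp a b => forall t, hle h t -> sat V i t a -> sat V i t b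
  | Next a => sat V (S i) h a
  | Until a b =>
      exists k, sat V (i + k) h b /\ (forall j, j < k -> sat V (i + j) h a)
  | Release a b =>
      forall k, sat V (i + k) h b \/ (exists j, j < k /\ sat V (i + j) h a)
  end.

Definition sat_theory (A : Type) (V : valuation A) (Gamma : formula A -> Prop)
  : Prop := forall phi, Gamma phi -> sat V 0 false phi.

Definition total (A : Type) (V : valuation A) : Prop :=
  forall i p, V i false p <-> V i true p.

Definition model_le (A : Type) (V' V : valuation A) : Prop :=
  forall i, (forall p, V' i true p <-> V i true p) /\
            (forall p, V' i false p -> V i false p).

Definition model_lt (A : Type) (V' V : valuation A) : Prop :=
  model_le V' V /\ exists i h p, ~ (V' i h p <-> V i h p).

Definition temporal_equilibrium (A : Type) (V : valuation A)
  (Gamma : formula A -> Prop) : Prop :=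
  tht_model V /\ total V /\ sat_theory V Gamma /\
  forall V', tht_model V' -> model_lt V' V -> ~ sat_theory V' Gamma.

Definition Th (A : Type) (V : valuation A) : formula A -> Prop :=
  fun phi => sat V 0 false phi.

(* The theory Gamma ∪ {¬φ | φ ∉ Th(M)} pins down the "there" worlds of any of
   its THT models M': if p ∈ V(i,1) then ¬◯^i p ∉ Th(M), so M' ⊨ ¬¬◯^i p and
   p ∈ V'(i,1); if p ∉ V(i,1) then M' ⊨ ¬◯^i p and p ∉ V'(i,1).  Hence M' ≤ M
   and M' ⊨ Gamma, so minimality of the equilibrium model M forces M' = M,
   which is total. *)

From mathcomp Require Import ssreflect choice.
From Stdlib Require Import Classical.

Set Implicit Arguments.
Unset Strict Implicit.

Section Semantics.

Variables (A : Type) (V : valuation A).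

Lemma sat_iter_Next n f i h :
  sat V i h (Nat.iter n (@Next A) f) <-> sat V (n + i) h f.
Proof.
elim: n i => [|n IHn] i //=.
by rewrite IHn -plus_n_Sm.
Qed.

Lemma sat_iter_Next_Atom i h p :
  sat V 0 h (Nat.iter i (@Next A) (Atom p)) <-> V i h p.
Proof. by rewrite sat_iter_Next -plus_n_O. Qed.

Lemma sat_Neg_there f i h : sat V i h (Neg f) -> ~ sat V i true f.
Proof. by move=> negf; apply: negf; case: h. Qed.

Lemma sat_there_Neg f i : ~ sat V i true f -> sat V i true (Neg f).
Proof. by move=> nf [] // _. Qed.

Lemma sat_NegNeg_there f i h : sat V i h (Neg (Neg f)) -> sat V i true f.
Proof.
move=> nnf; apply: NNPP => nf.
exact: sat_Neg_there nnf (sat_there_Neg nf).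
Qed.

End Semantics.

Section Equilibrium.

Variables (A : Type) (V V' : valuation A).
Hypothesis V_total : total V.

Lemma there_eq_of_refutes :
  (forall phi, ~ Th V phi -> sat V' 0 false (Neg phi)) ->
  forall i p, V i true p <-> V' i true p.
Proof.
move=> refutes i p; set nexts_p := Nat.iter i (@Next A) (Atom p).
have Th_nexts_p : Th V nexts_p <-> V i true p.
  by rewrite /Th sat_iter_Next_Atom V_total.
split=> [Vp | V'p].
- have /refutes /sat_NegNeg_there : ~ Th V (Neg nexts_p).
    by move=> /sat_Neg_there; apply; rewrite sat_iter_Next_Atom.
  by rewrite sat_iter_Next_Atom.
- apply: NNPP => /Th_nexts_p /refutes /sat_Neg_there.
  by rewrite sat_iter_Next_Atom.
Qed.

Lemma model_le_of_there_eq :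
  tht_model V' -> (forall i p, V' i true p <-> V i true p) -> model_le V' V.
Proof.
move=> V'_tht there_eq i; split=> [//|p /V'_tht].
by rewrite there_eq V_total.
Qed.

End Equilibrium.

Lemma model_eq_of_le_not_lt (A : Type) (V' V : valuation A) :
  model_le V' V -> ~ model_lt V' V -> forall i h p, V' i h p <-> V i h p.
Proof.
move=> le_V'V not_lt i h p; apply: NNPP => neq.
by apply: not_lt; split; last exists i, h, p.
Qed.

Theorem proposition5p1 (A : countType) (Gamma : formula A -> Prop)
  (V : valuation A) :
  temporal_equilibrium V Gamma ->
  forall V' : valuation A, tht_model V' ->
    sat_theory V' (fun psi => Gamma psi \/
                     exists phi, ~ Th V phi /\ psi = Neg phi) ->
    forall i, (forall p, V i true p <-> V' i true p) /\
              (forall p, V' i true p <-> V' i false p).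
Proof.
move=> [_ [V_total [_ V_minimal]]] V' V'_tht V'_sat.
have V'_Gamma : sat_theory V' Gamma.
  by move=> phi Gamma_phi; apply: V'_sat; left.
have V'_refutes : forall phi, ~ Th V phi -> sat V' 0 false (Neg phi).
  by move=> phi not_Th; apply: V'_sat; right; exists phi.
have there_eq := there_eq_of_refutes V_total V'_refutes.
have le_V'V : model_le V' V.
  by apply: model_le_of_there_eq => // i p; rewrite there_eq.
have V'_eq_V : forall i h p, V' i h p <-> V i h p.
  by apply: model_eq_of_le_not_lt => // lt_V'V; apply: (V_minimal V').
move=> i; split=> // p.
by rewrite !V'_eq_V V_total.
Qed.
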